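(* Let $A=[a_{ij}]$ be a symmetric $n\times n$ real matrix all of whose entries (including diagonal entries) lie in $\{1,-1\}$, and let $E(x_1,\dots,x_n)=\sum_{i=1}^n a_{ii}x_i^2+2\sum_{i<j}a_{ij}x_ix_j$. Then $E(x_1,\dots,x_n)\ge 0$ for all $(x_1,\dots,x_n)\in\mathbb{R}^n$ if and only if there exist $b_1,\dots,b_n\in\{1,-1\}$ such that $E(x_1,\dots,x_n)=(b_1x_1+b_2x_2+\dots+b_nx_n)^2$ for all $(x_1,\dots,x_n)\in\mathbb{R}^n$. *)

From mathcomp Require Import all_boot all_order all_algebra.
From mathcomp Require Import reals.
Set Implicit Arguments. Unset Strict Implicit. Unset Printing Implicit Defensive.
Import Order.TTheory GRing.Theory Num.Theory.
Local Open Scope ring_scope.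

Definition quadE (R : ringType) (n : nat) (A : 'M[R]_n) (x : 'I_n -> R) : R :=
  \sum_(i < n) A i i * x i ^+ 2
  + 2 * \sum_(i < n) \sum_(j < n | (i < j)%N) A i j * x i * x j.

Definition pm1 (R : ringType) (a : R) : Prop := a = 1 \/ a = -1.

From mathcomp Require Import all_boot all_order all_algebra.
From mathcomp Require Import reals.
From mathcomp Require Import ring lra.
Set Implicit Arguments. Unset Strict Implicit. Unset Printing Implicit Defensive.
Import Order.TTheory GRing.Theory Num.Theory.
Local Open Scope ring_scope.

(* If E is nonnegative, testing it on e_i forces a_ii = 1, and testing it on
   e_i - a_ij e_j - a_ik e_k gives 2 a_ij a_ik a_jk - 1 >= 0, i.e.
   a_jk = a_ij a_ik.  So A = b b^T with b the i-th row of A, and then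
   E(x) = (b . x)^2. *)

Section QuadraticForm.

Variables (R : comNzRingType) (n : nat).
Implicit Types (A : 'M[R]_n) (x : 'I_n -> R).

Definition qform A x : R := \sum_i \sum_j A i j * x i * x j.

Lemma sum_ord_split (F : 'I_n -> R) (i : 'I_n) :
  \sum_j F j = F i + \sum_(j : 'I_n | (i < j)%N) F j + \sum_(j : 'I_n | (j < i)%N) F j.
Proof.
rewrite (bigD1 i) //= (bigID (fun j : 'I_n => (i < j)%N)) /= addrA.
congr (_ + _ + _); apply: eq_bigl => j /=; rewrite -(inj_eq val_inj) /=;
  by case: ltngtP => //= ->; rewrite eqxx.
Qed.

Lemma quadE_qform A x : A^T = A -> quadE A x = qform A x.
Proof.
move=> symA; rewrite /quadE /qform.
under [RHS]eq_bigr => i _ do rewrite (sum_ord_split _ i).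
rewrite !big_split /= -addrA; congr (_ + _).
  by apply: eq_bigr => i _; rewrite expr2 mulrA.
rewrite mulr_natl mulr2n; congr (_ + _).
under [RHS]eq_bigr => i _ do rewrite big_mkcond.
rewrite exchange_big /=; apply: eq_bigr => i _; rewrite big_mkcond /=.
apply: eq_bigr => j _; case: ifP => // _.
have -> : A j i = A i j by rewrite -[in RHS]symA mxE.
ring.
Qed.

Lemma qform_rank1 A (b : 'I_n -> R) x :
  (forall i j, A i j = b i * b j) -> qform A x = (\sum_i b i * x i) ^+ 2.
Proof.
move=> Ab; rewrite expr2 mulr_suml; apply: eq_bigr => i _.
by rewrite mulr_sumr; apply: eq_bigr => j _; rewrite Ab; ring.
Qed.

Lemma sum_mul_delta (F : 'I_n -> R) (i : 'I_n) : \sum_l F l * (l == i)%:R = F i.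
Proof.
by under eq_bigr => l _ do rewrite mulr_natr mulrb; rewrite -big_mkcond big_pred1_eq.
Qed.

Definition vec3 (c1 c2 c3 : R) (i j k : 'I_n) : 'I_n -> R :=
  fun l => c1 * (l == i)%:R + c2 * (l == j)%:R + c3 * (l == k)%:R.

Lemma sum_mul_vec3 (F : 'I_n -> R) c1 c2 c3 i j k :
  \sum_l F l * vec3 c1 c2 c3 i j k l = c1 * F i + c2 * F j + c3 * F k.
Proof.
under eq_bigr => l _ do rewrite /vec3 !mulrDr ![F l * (_ * _)]mulrCA.
by rewrite !big_split /= -!mulr_sumr !sum_mul_delta.
Qed.

Lemma qform_vec3 A c1 c2 c3 i j k :
  qform A (vec3 c1 c2 c3 i j k) =
  c1 * (c1 * A i i + c2 * A i j + c3 * A i k)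
  + c2 * (c1 * A j i + c2 * A j j + c3 * A j k)
  + c3 * (c1 * A k i + c2 * A k j + c3 * A k k).
Proof.
rewrite /qform (eq_bigr (fun p =>
  (c1 * A p i + c2 * A p j + c3 * A p k) * vec3 c1 c2 c3 i j k p)).
  by rewrite sum_mul_vec3.
by move=> p _; rewrite sum_mul_vec3; ring.
Qed.

End QuadraticForm.

Section SignMatrix.

Variables (R : realDomainType) (n : nat) (A : 'M[R]_n).
Hypotheses (symA : A^T = A) (pmA : forall i j, pm1 (A i j))
  (psdA : forall x, 0 <= qform A x).

Lemma psd_sign_diag i : A i i = 1.
Proof.
have := psdA (vec3 1 0 0 i i i); rewrite qform_vec3.
by case: (pmA i i) => -> // h; lra.
Qed.

Lemma psd_sign_factor i j k : A j k = A i j * A i k.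
Proof.
have Asym p q : A q p = A p q by rewrite -[in RHS]symA mxE.
have := psdA (vec3 1 (- A i j) (- A i k) i j k); rewrite qform_vec3.
rewrite (Asym i j) (Asym i k) (Asym j k) !psd_sign_diag.
by case: (pmA i j) => ->; case: (pmA i k) => ->; case: (pmA j k) => -> h; lra.
Qed.

End SignMatrix.

Theorem mainTheorem3 (R : realType) (n : nat) (A : 'M[R]_n)
  (hsym : A^T = A) (hpm : forall i j, pm1 (A i j)) :
  (forall x : 'I_n -> R, 0 <= quadE A x) <->
  (exists b : 'I_n -> R, (forall i, pm1 (b i)) /\
     forall x : 'I_n -> R, quadE A x = (\sum_(i < n) b i * x i) ^+ 2).
Proof.
split=> [psdE | [b [_ bE]] x]; last by rewrite bE sqr_ge0.
have psdA x : 0 <= qform A x by rewrite -quadE_qform.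
case: n A hsym hpm psdA {psdE} => [|n] A hsym hpm psdA.
  exists (fun=> 1); split=> [_|x]; first by left.
  by rewrite /quadE !big_ord0 mulr0 addr0 expr2 mulr0.
exists (A ord0); split=> [i|x]; first exact: hpm.
by rewrite quadE_qform // (qform_rank1 _ (psd_sign_factor hsym hpm psdA ord0)).
Qed.
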